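(* Suppose there are at least three states ($n\ge3$). If an updating rule respects the Blackwell order for a prior $\mu$ in the relative interior of $\Delta$, then either $\varphi^{\mu}(x)=x$ for all $x\in\Delta$ (Bayes' law), or $\varphi^{\mu}$ is constant on the relative interior of $\Delta$.
   Context: Let $\Theta$ be a finite set of states, $|\Theta|=n$, and $\Delta=\Delta(\Theta)$ the simplex of beliefs on $\Theta$. An experiment is a map $\pi:\Theta\to\Delta(S)$ with $S$ finite; with prior $\mu$ it induces the Bayesian distribution over posteriors $\rho_B$, a finitely supported distribution on $\Delta$ with mean $\mu$ (every such distribution arises from some experiment). Blackwell order: $\pi\succeq\pi'$ iff $\rho_B'$ is a mean-preserving contraction of $\rho_B$. An updating rule is given, for each prior $\mu$, by a distortion function $\varphi^{\mu}:\Delta\to\Delta$: when the Bayesian posterior is $x$, the decision maker holds belief $\varphi^{\mu}(x)$. For a compact action set $A$, continuous $u:A\times\Theta\to\mathbb{R}$, and consistent choice $a^*:\Delta\to A$ (i.e. $a^*(y)\in\arg\max_{a}\mathbb{E}_y u(a,\theta)$ for all $y$), let $W(x)=\mathbb{E}_x u(a^*(\varphi^{\mu}(x)),\theta)$. The rule respects the Blackwell order for $\mu$ if for all such $A,u,a^*$ and all experiments $\pi\succeq\pi'$ with Bayesian distributions $\rho_B,\rho_B'$, $\mathbb{E}_{\rho_B}W\ge\mathbb{E}_{\rho_B'}W$. *)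

From HB Require Import structures.
From mathcomp Require Import all_boot all_order all_algebra.
From mathcomp Require Import all_classical all_reals all_analysis.
Set Implicit Arguments. Unset Strict Implicit. Unset Printing Implicit Defensive.
Import Order.TTheory GRing.Theory Num.Theory numFieldNormedType.Exports.
Local Open Scope ring_scope.
Local Open Scope classical_set_scope.

Section Defs.
Variable R : realType.

(* Beliefs on the state space Theta = 'I_n are row vectors; x 0 t = x(t). *)
Definition simplex n (x : 'rV[R]_n) : Prop :=
  (forall t, 0 <= x 0 t) /\ \sum_t x 0 t = 1.

Definition relint_simplex n (x : 'rV[R]_n) : Prop :=
  (forall t, 0 < x 0 t) /\ \sum_t x 0 t = 1.

Definition expect n (x : 'rV[R]_n) (f : 'I_n -> R) : R :=
  \sum_t x 0 t * f t.

(* A finitely supported distribution on Delta, given as atoms x j with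
   weights p j, j < m, having mean mu. *)
Definition fsdist_mean n m (p : 'I_m -> R) (x : 'I_m -> 'rV[R]_n)
    (mu : 'rV[R]_n) : Prop :=
  [/\ (forall j, 0 <= p j), \sum_j p j = 1, (forall j, simplex (x j))
    & \sum_j p j *: x j = mu].

(* (p', x') is a mean-preserving contraction of (p, x): there is a Markov
   kernel q from atoms of rho' to atoms of rho that splits each atom of rho'
   (of positive weight) into a distribution with the same mean, and whose
   mixture under rho' is rho. *)
Definition mpc n m m' (p : 'I_m -> R) (x : 'I_m -> 'rV[R]_n)
    (p' : 'I_m' -> R) (x' : 'I_m' -> 'rV[R]_n) : Prop :=
  exists q : 'I_m' -> 'I_m -> R,
    [/\ (forall i j, 0 <= q i j), (forall i, \sum_j q i j = 1),
        (forall j, \sum_i p' i * q i j = p j)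
      & (forall i, 0 < p' i -> \sum_j q i j *: x j = x' i)].

(* The updating rule with distortion phi (= phi^mu) respects the Blackwell
   order for prior mu. Action sets are compact metric spaces. *)
Definition respects_blackwell n (phi : 'rV[R]_n -> 'rV[R]_n) (mu : 'rV[R]_n)
    : Prop :=
  forall (A : pseudoMetricType R) (u : A -> 'I_n -> R) (astar : 'rV[R]_n -> A),
    hausdorff_space A -> compact [set: A] ->
    (forall t, continuous (fun a => u a t)) ->
    (forall y, simplex y -> forall a, expect y (u a) <= expect y (u (astar y))) ->
    let W := fun x => expect x (u (astar (phi x))) in
    forall m (p : 'I_m -> R) (x : 'I_m -> 'rV[R]_n)
           m' (p' : 'I_m' -> R) (x' : 'I_m' -> 'rV[R]_n),
      fsdist_mean p x mu -> fsdist_mean p' x' mu -> mpc p x p' x' ->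
      \sum_j p' j * W (x' j) <= \sum_j p j * W (x j).

End Defs.

From HB Require Import structures.
From mathcomp Require Import all_boot all_order all_algebra.
From mathcomp Require Import all_classical all_reals all_analysis.
From mathcomp Require Import ring lra.
Set Implicit Arguments. Unset Strict Implicit. Unset Printing Implicit Defensive.
Import Order.TTheory GRing.Theory Num.Theory numFieldNormedType.Exports.
Local Open Scope ring_scope.

(* Let the decision maker choose between betting on [d : 'I_n -> R] and
   abstaining. Blackwell monotonicity makes the true value of this choice, made
   with the distorted belief, convex on the simplex: spreading the posterior
   [a x1 + (1 - a) x2] splits one atom of a two-point distribution of mean
   [mu]. Along segments, convexity shows that a bet which is profitable at [a]
   but rejected by [phi a] is rejected by [phi z] at every interior [z] where
   it is not fair. Shifting [d] by constants, [E_(phi a) f < E_a f] forces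
   [E_(phi z) f <= E_(phi a) f] for every [f], so by duality [phi z] lies on
   the ray from [phi a] pointing away from [a]. If [phi x <> x] and [n >= 3],
   pick an interior [w] off the line through [x] and [phi x]: every interior
   [phi z] lies both on that line and on the ray issued from [phi w] away from
   [w], which meet only at [phi w]. *)

Section Simplex.
Variables (R : realType) (n : nat).
Implicit Types (x y z c : 'rV[R]_n) (f : 'I_n -> R).

Lemma fin_lbound (I : finType) (g : I -> R) :
  (forall i, 0 < g i) -> exists2 e, 0 < e & forall i, e <= g i.
Proof.
move=> g_gt0; exists (\big[Num.min/1]_i g i).
  by apply: (big_ind (fun r : R => 0 < r)) => // r s r0 s0; rewrite lt_min r0 s0.
by move=> i; rewrite (bigD1 i) //= ge_min lexx.
Qed.

Lemma open_interval_avoid (v lo hi : R) : lo < hi ->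
  exists r, [/\ lo < r, r < hi & r != v].
Proof.
move=> lo_hi; have [e|ne] := eqVneq ((2 * lo + hi) / 3) v.
- by exists ((lo + 2 * hi) / 3); split; lra.
- by exists ((2 * lo + hi) / 3); split => //; lra.
Qed.

Lemma expect_comb x1 x2 a b f :
  expect (a *: x1 + b *: x2) f = a * expect x1 f + b * expect x2 f.
Proof.
rewrite /expect !mulr_sumr -big_split; apply: eq_bigr => t _.
by rewrite !mxE mulrDl !mulrA.
Qed.

Lemma expectB x1 x2 f : expect (x1 - x2) f = expect x1 f - expect x2 f.
Proof. by rewrite /expect -sumrB; apply: eq_bigr => t _; rewrite !mxE mulrBl. Qed.

Lemma expectC x y : expect x (y 0) = expect y (x 0).
Proof. by apply: eq_bigr => t _; rewrite mulrC. Qed.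

Lemma expect_if x f (b : bool) :
  expect x (fun t => if b then f t else 0) = if b then expect x f else 0.
Proof. by case: b => //; rewrite /expect big1 // => t _; rewrite mulr0. Qed.

Lemma expect_addr x f k : simplex x -> expect x (fun t => f t + k) = expect x f + k.
Proof.
case=> _ x1; rewrite /expect; under eq_bigr do rewrite mulrDr.
by rewrite big_split /= -mulr_suml x1 mul1r.
Qed.

Lemma expect_sqr_ge0 x : 0 <= expect x (x 0).
Proof. by apply: sumr_ge0 => t _; rewrite -expr2 sqr_ge0. Qed.

Lemma expect_sqr_eq0 x : expect x (x 0) = 0 -> x = 0.
Proof.
have sqr_ge0 t : true -> 0 <= x 0 t * x 0 t by rewrite -expr2 sqr_ge0.
move=> /(psumr_eq0P sqr_ge0) x0; apply/rowP => t; rewrite mxE.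
by have /eqP := x0 t isT; rewrite mulf_eq0 orbb => /eqP.
Qed.

Lemma relint_simplexW x : relint_simplex x -> simplex x.
Proof. by case=> x_gt0 x1; split=> // t; exact: ltW. Qed.

Lemma simplex_le1 x t : simplex x -> x 0 t <= 1.
Proof. by case=> x_ge0 <-; rewrite (bigD1 t) //= lerDl sumr_ge0. Qed.

Lemma sum_comb x1 x2 a b :
  \sum_t (a *: x1 + b *: x2) 0 t = a * \sum_t x1 0 t + b * \sum_t x2 0 t.
Proof. by rewrite !mulr_sumr -big_split; apply: eq_bigr => t _; rewrite !mxE. Qed.

Lemma simplex_conv x1 x2 a :
  simplex x1 -> simplex x2 -> 0 <= a <= 1 -> simplex (a *: x1 + (1 - a) *: x2).
Proof.
move=> [x1_ge0 x1_sum] [x2_ge0 x2_sum] /andP[a_ge0 a_le1].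
split; last by rewrite sum_comb x1_sum x2_sum; ring.
by move=> t; rewrite !mxE addr_ge0 ?mulr_ge0 ?subr_ge0.
Qed.

(* [z] is [y] pushed through [c] by a fraction [e] of the least coordinate of
   [c]. *)
Lemma relint_simplex_split c y : relint_simplex c -> simplex y ->
  exists k z, [/\ 0 < k, k < 1, simplex z & c = k *: y + (1 - k) *: z].
Proof.
move=> [c_gt0 c_sum] sy; have [e e_gt0 e_le] := fin_lbound c_gt0.
have e1 : 1 + e != 0 by rewrite lt0r_neq0 //; lra.
exists (e / (1 + e)), ((1 + e) *: c + (- e) *: y); split.
- by rewrite divr_gt0 //; lra.
- by rewrite ltr_pdivrMr; lra.
- split; last by rewrite sum_comb c_sum sy.2; ring.
  move=> t; have := simplex_le1 t sy; have := e_le t; rewrite !mxE => ec y1.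
  have : 0 <= e * c 0 t by rewrite mulr_ge0 //; lra.
  have : 0 <= e * (1 - y 0 t) by rewrite mulr_ge0 //; lra.
  lra.
- by apply/rowP => t; rewrite !mxE; field.
Qed.

Lemma relint_simplex_shift c i j : relint_simplex c -> i != j ->
  exists2 e, 0 < e &
    relint_simplex (c + \row_t (if t == i then e else if t == j then - e else 0)).
Proof.
move=> [c_gt0 c_sum] ij; have [e e_gt0 e_le] := fin_lbound c_gt0.
exists (e / 2); first lra; split.
  move=> t; rewrite !mxE; have := c_gt0 t; have := e_le t.
  by case: (t == i); case: (t == j); lra.
under eq_bigr do rewrite !mxE.
rewrite big_split /= c_sum (bigD1 i) //= (bigD1 j) 1?eq_sym //= big1.
  by rewrite !eqxx eq_sym (negbTE ij); ring.
by move=> t /andP[tj ti]; rewrite (negbTE ti) (negbTE tj).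
Qed.

Lemma relint_not_collinear c (a u : 'rV[R]_n) : (3 <= n)%N -> relint_simplex c ->
  exists w, relint_simplex w /\ forall s, w <> a + s *: u.
Proof.
move=> n3 rc; apply: contrapT => no_w.
have online w : relint_simplex w -> exists s, w = a + s *: u.
  move=> rw; apply: contrapT => no_s; apply: no_w; exists w.
  by split=> // s ws; apply: no_s; exists s.
have coord w s i : w = a + s *: u -> w 0 i = a 0 i + s * u 0 i.
  by move=> ->; rewrite !mxE.
pose i0 : 'I_n := Ordinal (ltnW (ltnW n3)).
pose i1 : 'I_n := Ordinal (ltnW n3).
pose i2 : 'I_n := Ordinal n3.
have [e1 e1_gt0 /online[s1 /coord c1]] := relint_simplex_shift (i := i0) (j := i1) rc isT.
have [e2 e2_gt0 /online[s2 /coord c2]] := relint_simplex_shift (i := i0) (j := i2) rc isT.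
have [s0 /coord c0] := online _ rc.
have := c1 i0; have := c1 i2; have := c2 i2; have := c0 i0; have := c0 i2.
rewrite !mxE /= => c0i2 c0i0 c2i2 c1i2 c1i0.
have s10 : s1 - s0 != 0.
  apply/eqP => s10; have : (s1 - s0) * u 0 i0 = e1 by lra.
  by rewrite s10 mul0r; lra.
have /eqP : (s1 - s0) * u 0 i2 = 0 by lra.
rewrite mulf_eq0 (negbTE s10) /= => /eqP u2; rewrite u2 in c0i2 c2i2; lra.
Qed.

Lemma halfspace_polar_ray (U V : 'rV[R]_n) : U != 0 ->
  (forall f, 0 < expect U f -> expect V f <= 0) -> exists2 t, 0 <= t & V = - t *: U.
Proof.
move=> U0 polar; set uu := expect U (U 0); set uv := expect V (U 0).
have uu_gt0 : 0 < uu.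
  by rewrite lt_def expect_sqr_ge0 andbT; apply: contra U0 => /eqP/expect_sqr_eq0 ->.
have uu_neq0 := lt0r_neq0 uu_gt0.
have uv_le0 : uv <= 0 by apply: polar.
set G := uu *: V + (- uv) *: U.
have UG : expect U (G 0) = 0 by rewrite expectC expect_comb -/uu -/uv; ring.
have VG : expect V (G 0) <= 0.
  rewrite leNgt; apply/negP => VG_gt0.
  set l := (1 - uv) / expect V (G 0).
  have lin x : expect (1 *: U + l *: G) (x 0) = expect U (x 0) + l * expect G (x 0).
    by rewrite expect_comb mul1r.
  have := polar ((1 *: U + l *: G) 0).
  rewrite (expectC U) (expectC V) !lin (expectC G U) UG (expectC U V) (expectC G V).
  have -> : l * expect V (G 0) = 1 - uv by rewrite /l divfK // gt_eqF.
  by rewrite -/uu -/uv; lra.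
have G0 : G = 0.
  apply: expect_sqr_eq0; apply/eqP; rewrite eq_le expect_sqr_ge0 andbT.
  by rewrite {1}/G expect_comb UG mulr0 addr0 pmulr_rle0.
exists (- uv / uu); first by rewrite divr_ge0 ?oppr_ge0 // ltW.
apply/rowP => t; have /= := congr1 (fun M : 'rV[R]_n => M 0 t) G0; rewrite !mxE => Gt.
apply: (mulfI uu_neq0).
have -> : uu * (- (- uv / uu) * U 0 t) = uv * U 0 t by field.
lra.
Qed.

End Simplex.

Section Blackwell.
Variables (R : realType) (n : nat) (phi : 'rV[R]_n -> 'rV[R]_n) (mu : 'rV[R]_n).
Hypotheses (mu_relint : relint_simplex mu) (phi_blackwell : respects_blackwell phi mu).
Hypothesis phi_simplex : forall x, simplex x -> simplex (phi x).
Implicit Types (x y z : 'rV[R]_n) (d f : 'I_n -> R).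

Definition decision_value (A : Type) (u : A -> 'I_n -> R) (astar : 'rV[R]_n -> A) x :=
  expect x (u (astar (phi x))).

(* The distribution [{y, z}] is a garbling of [{x1, x2, z}], where [z] comes
   from writing the interior prior as [mu = k y + (1 - k) z]. *)
Lemma blackwell_convex (A : pseudoMetricType R) (u : A -> 'I_n -> R) astar :
  hausdorff_space A -> compact [set: A] -> (forall t, continuous (fun a => u a t)) ->
  (forall y, simplex y -> forall a, expect y (u a) <= expect y (u (astar y))) ->
  forall x1 x2 a, simplex x1 -> simplex x2 -> 0 <= a <= 1 ->
  decision_value u astar (a *: x1 + (1 - a) *: x2) <=
    a * decision_value u astar x1 + (1 - a) * decision_value u astar x2.
Proof.
move=> A_haus A_compact u_cont astar_opt x1 x2 a s1 s2 a01.
have /andP[a_ge0 a_le1] := a01.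
set y := a *: x1 + (1 - a) *: x2.
have sy : simplex y := simplex_conv s1 s2 a01.
have [k [z [k_gt0 k_lt1 sz mu_split]]] := relint_simplex_split mu_relint sy.
pose p (j : 'I_3) := [:: k * a; k * (1 - a); 1 - k]`_j.
pose xs (j : 'I_3) := [:: x1; x2; z]`_j.
pose p' (i : 'I_2) := [:: k; 1 - k]`_i.
pose xs' (i : 'I_2) := [:: y; z]`_i.
pose q (i : 'I_2) (j : 'I_3) :=
  (if i == ord0 then [:: a; 1 - a; 0] else [:: 0; 0; 1])`_j.
have rho : fsdist_mean p xs mu.
  split.
  - by case=> [[|[|[|j]]] hj] //=; rewrite /p /=; nra.
  - by rewrite !big_ord_recl big_ord0 /p /=; ring.
  - by case=> [[|[|[|j]]] hj] //=; rewrite /xs.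
  - rewrite !big_ord_recl big_ord0 /p /xs /= mu_split.
    by apply/rowP => t; rewrite !mxE; ring.
have rho' : fsdist_mean p' xs' mu.
  split.
  - by case=> [[|[|j]] hj] //=; rewrite /p' /=; lra.
  - by rewrite !big_ord_recl big_ord0 /p' /=; ring.
  - by case=> [[|[|j]] hj] //=; rewrite /xs'.
  - by rewrite !big_ord_recl big_ord0 /p' /xs' /= addr0 mu_split.
have garbling : mpc p xs p' xs'.
  exists q; split.
  - by case=> [[|[|i]] hi] [[|[|[|j]]] hj] //=; rewrite /q /=; lra.
  - by case=> [[|[|i]] hi] //=; rewrite !big_ord_recl big_ord0 /q /=; ring.
  - by case=> [[|[|[|j]]] hj] //=; rewrite !big_ord_recl big_ord0 /q /p /p' /=; ring.
  - case=> [[|[|i]] hi] //= _; rewrite !big_ord_recl big_ord0 /q /xs /xs' /=;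
      by apply/rowP => t; rewrite !mxE; ring.
have := phi_blackwell A_haus A_compact u_cont astar_opt rho rho' garbling.
rewrite !big_ord_recl !big_ord0 /p /p' /xs /xs' /= => value_le.
by rewrite /decision_value -(ler_pM2l k_gt0); lra.
Qed.

Definition bet_value d x := if 0 <= expect (phi x) d then expect x d else 0.

Lemma bet_value_convex d x1 x2 a : simplex x1 -> simplex x2 -> 0 <= a <= 1 ->
  bet_value d (a *: x1 + (1 - a) *: x2) <= a * bet_value d x1 + (1 - a) * bet_value d x2.
Proof.
move=> s1 s2 a01; pose u (b : bool) t := if b then d t else 0.
have u_cont t : continuous (fun b => u b t).
  move=> b U Ub; rewrite /= nbhs_principalE; apply/principal_filterP.
  exact: nbhs_singleton Ub.
have bet_opt y : simplex y -> forall b, expect y (u b) <= expect y (u (0 <= expect y d)).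
  move=> _ b; rewrite /u !expect_if.
  by case: b; case: ifP => // /negbT; rewrite -ltNge => /ltW.
have := blackwell_convex discrete_hausdorff bool_compact u_cont bet_opt s1 s2 a01.
by rewrite /decision_value /u /= !expect_if.
Qed.

Lemma expect_phi_lt0 d a z : simplex a -> 0 < expect a d -> expect (phi a) d < 0 ->
  relint_simplex z -> expect z d != 0 -> expect (phi z) d < 0.
Proof.
move=> sa Ea_gt0 Ephia_lt0 rz; rewrite neq_lt => Ez_neq0.
rewrite ltNge; apply/negP => Ephiz_ge0.
have Va : bet_value d a = 0 by rewrite /bet_value lt_geF.
have Vz : bet_value d z = expect z d by rewrite /bet_value Ephiz_ge0.
case/orP: Ez_neq0 => [Ez_lt0|Ez_gt0].
- have D_gt0 : 0 < expect a d - expect z d by lra.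
  set l := - expect z d / (expect a d - expect z d).
  have l_lt1 : l < 1 by rewrite ltr_pdivrMr; lra.
  have l01 : 0 <= l <= 1 by rewrite (ltW l_lt1) andbT divr_ge0 //; lra.
  have Ey : expect (l *: a + (1 - l) *: z) d = 0.
    by rewrite expect_comb /l; field; rewrite lt0r_neq0.
  have := bet_value_convex d sa (relint_simplexW rz) l01.
  rewrite Va Vz /bet_value Ey if_same.
  have : 0 < (1 - l) * - expect z d by rewrite mulr_gt0 //; lra.
  lra.
- have [k [x2 [k_gt0 k_lt1 sx2 z_split]]] := relint_simplex_split rz sa.
  have Ez : expect z d = k * expect a d + (1 - k) * expect x2 d.
    by rewrite z_split expect_comb.
  have := mulr_gt0 k_gt0 Ea_gt0.
  have k01 : 0 <= k <= 1 by rewrite !ltW.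
  have := bet_value_convex d sa sx2 k01; rewrite -z_split Va Vz /bet_value.
  by case: ifP => _; lra.
Qed.

Lemma phi_expect_le f a z : simplex a -> relint_simplex z ->
  expect (phi a) f < expect a f -> expect (phi z) f <= expect (phi a) f.
Proof.
move=> sa rz lt_a; rewrite leNgt; apply/negP => lt_z.
have sz := relint_simplexW rz.
have [spa spz] := (phi_simplex sa, phi_simplex sz).
have lo_hi : expect (phi a) f < Num.min (expect a f) (expect (phi z) f).
  by rewrite lt_min lt_a lt_z.
have [c [lo_c]] := open_interval_avoid (expect z f) lo_hi.
rewrite lt_min => /andP[c_a c_z] c_neq.
have shift x : simplex x -> expect x (fun t => f t - c) = expect x f - c.
  exact: expect_addr.
have : expect (phi z) (fun t => f t - c) < 0.
  by apply: (expect_phi_lt0 sa _ _ rz); rewrite !shift ?subr_eq0 1?eq_sym //; lra.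
by rewrite shift //; lra.
Qed.

Lemma phi_on_ray a z : simplex a -> phi a != a -> relint_simplex z ->
  exists2 t, 0 <= t & phi z = phi a + t *: (phi a - a).
Proof.
move=> sa phia rz.
have U0 : a - phi a != 0 by rewrite subr_eq0 eq_sym.
have polar f : 0 < expect (a - phi a) f -> expect (phi z - phi a) f <= 0.
  by rewrite !expectB subr_gt0 subr_le0; exact: phi_expect_le.
have [t t_ge0 phiz] := halfspace_polar_ray U0 polar.
exists t => //.
by rewrite -[phi z](subrK (phi a)) phiz scaleNr -scalerN opprB addrC.
Qed.

Lemma phi_relint_const x : (3 <= n)%N -> simplex x -> phi x != x ->
  forall z1 z2, relint_simplex z1 -> relint_simplex z2 -> phi z1 = phi z2.
Proof.
move=> n3 sx phix; set u := phi x - x.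
have [w [rw w_off]] := relint_not_collinear x u n3 mu_relint.
have [tw _ phiw] := phi_on_ray sx phix rw.
have phiw_w : phi w != w.
  apply/eqP => phiwE; apply: (w_off (1 + tw)).
  by rewrite -{1}phiwE phiw /u scalerDl scale1r addrCA subrKA.
suff phiz z : relint_simplex z -> phi z = phi w by move=> z1 z2 /phiz-> /phiz->.
move=> rz; have [tz _ phiz] := phi_on_ray sx phix rz.
have [s _ phizw] := phi_on_ray (relint_simplexW rw) phiw_w rz.
have [s0E|s0] := eqVneq s 0; first by rewrite phizw s0E scale0r addr0.
(* otherwise the line through [phi w] and [phi z] would carry [w] *)
exfalso; apply: (w_off ((1 + tw) - (tz - tw) / s)).
apply/rowP => i; have := congr1 (fun M : 'rV[R]_n => M 0 i) phizw.
rewrite phiz phiw /u !mxE => phizw_i; apply: (mulfI s0).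
have -> : s * (x 0 i + (1 + tw - (tz - tw) / s) * (phi x 0 i - x 0 i)) =
  s * x 0 i + (s * (1 + tw) - (tz - tw)) * (phi x 0 i - x 0 i) by field.
lra.
Qed.

End Blackwell.

Theorem corollary1 (R : realType) (n : nat)
    (phi : 'rV[R]_n -> 'rV[R]_n) (mu : 'rV[R]_n) :
  (3 <= n)%N ->
  relint_simplex mu ->
  (forall x, simplex x -> simplex (phi x)) ->
  respects_blackwell phi mu ->
  (forall x, simplex x -> phi x = x) \/
  (forall x y, relint_simplex x -> relint_simplex y -> phi x = phi y).
Proof.
move=> n3 mu_relint phi_simplex phi_blackwell.
have [[x [sx phix]]|bayes] := pselect (exists x, simplex x /\ phi x != x).
  by right=> y1 y2; apply: (phi_relint_const mu_relint phi_blackwell phi_simplex n3 sx phix).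
by left => x sx; case: (eqVneq (phi x) x) => // phix; case: bayes; exists x.
Qed.
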